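(* Let $m\ge 1$ and let $G=\overline{B(K_m,K_3)}$ be a graph whose vertex set is the disjoint union of a clique $K_m$ and a clique $K_3$ with vertices $1,2,3$, with arbitrary edges between $V(K_m)$ and $\{1,2,3\}$, subject to the conditions that no vertex of $K_m$ is adjacent to all three of $1,2,3$ (i.e. $N_{123}=\emptyset$) and every vertex of $K_m$ is adjacent to at least one of $1,2,3$ (i.e. $N_{\overline{1}\overline{2}\overline{3}}=\emptyset$). Then $G$ is word-representable.
   Context: A graph $G=(V,E)$ is word-representable if there exists a word $w$ over the alphabet $V$, containing every letter of $V$ at least once, such that for all distinct $x,y\in V$, the letters $x$ and $y$ alternate in $w$ (i.e., the subword of $w$ obtained by deleting all letters other than $x,y$ has no two equal consecutive letters) if and only if $xy\in E$. For $i\in\{1,2,3\}$, $N_i$ is the set of neighbours of $i$; $N_{123}$ is the set of $v\in V(K_m)$ with $v\in N_1\cap N_2\cap N_3$, and $N_{\overline{1}\overline{2}\overline{3}}$ the set of $v\in V(K_m)$ with $v\notin N_1\cup N_2\cup N_3$. *)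

From mathcomp Require Import all_boot.
Set Implicit Arguments. Unset Strict Implicit. Unset Printing Implicit Defensive.

Definition alternate (V : eqType) (x y : V) (w : seq V) : bool :=
  let s := [seq z <- w | (z == x) || (z == y)] in
  sorted (fun a b => a != b) s.

Definition word_representable (V : finType) (E : rel V) : Prop :=
  exists w : seq V, (forall v : V, v \in w) /\
    (forall x y : V, x != y -> (alternate x y w <-> E x y)).

Definition coBKm3 (m : nat) (a : 'I_m -> 'I_3 -> bool) : rel ('I_m + 'I_3) :=
  fun u v =>
    match u, v with
    | inl i, inl j => i != j
    | inr k, inr l => k != l
    | inl i, inr k => a i k
    | inr k, inl i => a i k
    end.

From mathcomp Require Import all_boot.
Set Implicit Arguments. Unset Strict Implicit. Unset Printing Implicit Defensive.

(* Two vertices of K_m with the same neighbourhood in {1,2,3} are adjacent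
   twins.  Collapsing each twin class to a single vertex gives the graph with
   one K_m-vertex per admissible neighbourhood, i.e. per nonempty proper
   subset of {1,2,3}; and if a word represents the collapsed graph, replacing
   each letter by the list of all vertices of its class yields a word
   representing the original one.  The collapsed graph has 9 vertices and is
   represented by an explicit word of length 27, checked by computation. *)

Definition represents (V : eqType) (E : rel V) (w : seq V) : Prop :=
  (forall v, v \in w) /\ (forall x y, x != y -> alternate x y w = E x y).

Lemma represents_word_representable (V : finType) (E : rel V) (w : seq V) :
  represents E w -> word_representable E.
Proof. by case=> w_all w_alt; exists w; split=> // x y /w_alt ->. Qed.

Lemma word_representable_represents (V : finType) (E : rel V) :
  word_representable E -> exists w, represents E w.
Proof.
case=> w [w_all w_alt]; exists w; split=> // x y /w_alt alt_xy.
by apply/idP/idP => /alt_xy.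
Qed.

Section Blowup.

Variables (V L : finType) (tau : V -> L).

Definition fiber (l : L) : seq V := [seq x <- enum V | tau x == l].

Definition blowup (w : seq L) : seq V := flatten (map fiber w).

Lemma mem_fiber x l : (x \in fiber l) = (tau x == l).
Proof. by rewrite mem_filter mem_enum andbT. Qed.

Lemma mem_blowup x w : (x \in blowup w) = (tau x \in w).
Proof.
apply/flatten_mapP/idP => [[l l_w] | tx_w]; last by exists (tau x); rewrite ?mem_fiber.
by rewrite mem_fiber => /eqP ->.
Qed.

Lemma perm_filter_fiber x y l : x != y ->
  perm_eq [seq z <- fiber l | (z == x) || (z == y)] [seq z <- [:: x; y] | tau z == l].
Proof.
move=> neq_xy; apply: uniq_perm.
- by rewrite filter_uniq // filter_uniq // enum_uniq.
- by rewrite filter_uniq //= inE neq_xy.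
by move=> z; rewrite mem_filter mem_fiber mem_filter !inE andbC.
Qed.

Lemma filter_blowup_twins x y w : x != y -> tau x = tau y ->
  [seq z <- blowup w | (z == x) || (z == y)] =
  flatten (nseq (count_mem (tau x) w) [seq z <- fiber (tau x) | (z == x) || (z == y)]).
Proof.
move=> neq_xy tau_xy; elim: w => //= l w IHw.
rewrite filter_cat IHw; case: eqP => [<- //| /eqP neq_l] /=.
have /negPf neq_tl : tau x != l by rewrite eq_sym.
by rewrite (perm_small_eq _ (perm_filter_fiber l neq_xy)) /= -tau_xy neq_tl.
Qed.

Lemma map_filter_fiber x y l : tau x != tau y ->
  map tau [seq z <- fiber l | (z == x) || (z == y)] =
  [seq t <- [:: l] | (t == tau x) || (t == tau y)].
Proof.
move=> neq_txy; have neq_xy : x != y by apply: contraNneq neq_txy => ->.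
rewrite (perm_small_eq _ (perm_filter_fiber l neq_xy)) /=;
  case: (eqVneq (tau x) l) => [tx|_]; case: (eqVneq (tau y) l) => [ty|_];
  rewrite /= ?tx ?ty //; by rewrite tx ty eqxx in neq_txy.
Qed.

Lemma map_filter_blowup x y w : tau x != tau y ->
  map tau [seq z <- blowup w | (z == x) || (z == y)] =
  [seq l <- w | (l == tau x) || (l == tau y)].
Proof.
move=> neq_txy; elim: w => //= l w IHw.
by rewrite filter_cat map_cat IHw map_filter_fiber //=; case: ifP.
Qed.

Lemma alternate_blowup x y w : tau x != tau y ->
  alternate x y (blowup w) = alternate (tau x) (tau y) w.
Proof.
move=> neq_txy; have neq_xy : x != y by apply: contraNneq neq_txy => ->.
rewrite /alternate -map_filter_blowup // sorted_map.
apply: eq_in_sorted (filter_all _ _) => u v /orP[]/eqP-> /orP[]/eqP-> /=;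
  rewrite ?eqxx // ?neq_txy ?neq_xy //.
by rewrite eq_sym neq_xy eq_sym neq_txy.
Qed.

Lemma sorted_neq_repeat (T : eqType) (u v : T) n : u != v ->
  sorted (fun a b => a != b) (flatten (nseq n [:: u; v])).
Proof.
move=> neq_uv; case: n => //= n; rewrite neq_uv.
by elim: n => //= n ->; rewrite eq_sym neq_uv.
Qed.

Lemma alternate_blowup_twins x y w : x != y -> tau x = tau y ->
  alternate x y (blowup w).
Proof.
move=> neq_xy tau_xy; rewrite /alternate filter_blowup_twins //.
have := perm_filter_fiber (tau x) neq_xy; rewrite /= eqxx -tau_xy eqxx => /perm_size.
have : uniq [seq z <- fiber (tau x) | (z == x) || (z == y)].
  by rewrite filter_uniq // filter_uniq // enum_uniq.
case: [seq z <- fiber _ | _] => [|u [|v []]] //=.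
by rewrite inE andbT => neq_uv _; apply: sorted_neq_repeat.
Qed.

Lemma word_representable_blowup (E : rel V) (F : rel L) :
  (forall x y, x != y -> tau x = tau y -> E x y) ->
  (forall x y, tau x != tau y -> E x y = F (tau x) (tau y)) ->
  word_representable F -> word_representable E.
Proof.
move=> E_twins E_F /word_representable_represents[w [w_all w_alt]].
apply: (@represents_word_representable _ _ (blowup w)); split.
  by move=> x; rewrite mem_blowup w_all.
move=> x y neq_xy; have [tau_xy | neq_txy] := eqVneq (tau x) (tau y).
  by rewrite alternate_blowup_twins ?E_twins.
by rewrite alternate_blowup // w_alt // E_F.
Qed.

End Blowup.

(* Pattern i is the subset of {1,2,3} with bitmask i+1, so the masks 1..6
   enumerate the nonempty proper subsets. *)
Definition pat (i : 'I_6) (k : 'I_3) : bool := odd (i.+1 %/ 2 ^ k).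

Lemma ord3_cases (k : 'I_3) : [\/ k = ord0, k = inord 1 | k = inord 2].
Proof.
case: k => -[|[|[|//]]] lt_k; [constructor 1 | constructor 2 | constructor 3];
  by apply: val_inj; rewrite /= ?inordK.
Qed.

Lemma admissible_pattern (f : 'I_3 -> bool) :
  ~~ [forall k, f k] -> [exists k, f k] -> exists i, pat i =1 f.
Proof.
pose n := f ord0 + (f (inord 1)).*2 + 4 * f (inord 2).
have fP k : f k = odd (n %/ 2 ^ k).
  by rewrite /n; case: (ord3_cases k) => ->; rewrite ?inordK //;
    case: (f ord0); case: (f (inord 1)); case: (f (inord 2)).
move=> /forallPn[k0 /negPf f0] /existsP[k1 f1].
have n_range : 0 < n < 7.
  move: f0 f1; rewrite !fP /n.
  by case: (ord3_cases k0) => ->; case: (ord3_cases k1) => ->; rewrite ?inordK //;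
    case: (f ord0); case: (f (inord 1)); case: (f (inord 2)).
clearbody n; case/andP: n_range => n_gt0 n_lt7.
by exists (inord n.-1) => k; rewrite fP /pat inordK prednK.
Qed.

Local Notation P n := (inl (@Ordinal 6 n isT) : 'I_6 + 'I_3).
Local Notation K n := (inr (@Ordinal 3 n isT) : 'I_6 + 'I_3).

Definition patterns_word : seq ('I_6 + 'I_3) :=
  [:: P 0; P 2; P 1; P 5; P 3; K 0; P 4; P 0; K 1; P 2; P 1; K 2; P 5; P 3;
      K 0; P 4; P 0; K 1; P 2; K 2; K 0; P 1; P 5; K 1; P 3; P 4; K 2].

Lemma mem_patterns_word x : x \in patterns_word.
Proof.
by case: x => -[[|[|[|[|[|[|//]]]]]] ?] //; rewrite !inE; apply/orP; right; apply: val_inj.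
Qed.

Lemma patterns_word_alternate :
  all (fun x => all (fun y =>
         (x != y) ==> (alternate x y patterns_word == coBKm3 pat x y))
       patterns_word) patterns_word.
Proof. by vm_compute. Qed.

Lemma word_representable_patterns : word_representable (coBKm3 pat).
Proof.
apply: (@represents_word_representable _ _ patterns_word).
split=> [|x y neq_xy]; first exact: mem_patterns_word.
have /allP/(_ x (mem_patterns_word x))/allP/(_ y (mem_patterns_word y)) :=
  patterns_word_alternate.
by rewrite neq_xy => /eqP.
Qed.

Section Collapse.

Variables (m : nat) (a : 'I_m -> 'I_3 -> bool).
Hypothesis a_proper : forall v, ~~ [forall k, a v k].
Hypothesis a_nonempty : forall v, [exists k, a v k].

Definition pattern_index (v : 'I_m) : 'I_6 :=
  odflt ord0 [pick i | [forall k, pat i k == a v k]].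

Lemma pat_pattern_index v : pat (pattern_index v) =1 a v.
Proof.
rewrite /pattern_index; case: pickP => [i /forallP eq_i k | no_i]; first exact/eqP.
have [i eq_i] := admissible_pattern (a_proper v) (a_nonempty v).
by move/negbT/forallPn: (no_i i) => [k]; rewrite eq_i eqxx.
Qed.

Definition collapse (x : 'I_m + 'I_3) : 'I_6 + 'I_3 :=
  match x with inl v => inl (pattern_index v) | inr k => inr k end.

Lemma coBKm3_collapse_eq x y : x != y -> collapse x = collapse y -> coBKm3 a x y.
Proof. by case: x y => [u|k] [v|l] //= neq_xy [eq_kl]; rewrite eq_kl eqxx in neq_xy. Qed.

Lemma coBKm3_collapse_neq x y : collapse x != collapse y ->
  coBKm3 a x y = coBKm3 pat (collapse x) (collapse y).
Proof.
case: x y => [u|k] [v|l] //= neq_xy; rewrite ?pat_pattern_index //.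
by rewrite neq_xy; apply: contraNneq neq_xy => ->.
Qed.

End Collapse.

Theorem mainTheorem9 (m : nat) (a : 'I_m -> 'I_3 -> bool) :
  0 < m ->
  (* N_123 is empty: no vertex of K_m is adjacent to all of 1,2,3 *)
  (forall v : 'I_m, ~~ [forall k : 'I_3, a v k]) ->
  (* N_{not1 not2 not3} is empty: every vertex of K_m has a neighbour in {1,2,3} *)
  (forall v : 'I_m, [exists k : 'I_3, a v k]) ->
  word_representable (coBKm3 a).
Proof.
move=> _ a_proper a_nonempty.
apply: (word_representable_blowup (tau := collapse a)) word_representable_patterns.
  exact: coBKm3_collapse_eq.
exact: coBKm3_collapse_neq.
Qed.
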